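(* Let $d\geqslant 5$ be an integer and let $r$ be an integer with $\gcd(d,r)=1$. Let $a\geqslant 1$ be an integer and $n=ad-r$, and assume $n\geqslant r$. Suppose that $2r+kd\equiv 0\pmod{n}$ for some integer $k>0$. Then $k\geqslant a(d-4)/2$. *)

From Stdlib Require Import ZArith Reals.

From Stdlib Require Import ZArith Reals Lia Lra.

(* Since d (k + 2a) = (2r + k d) + 2n and n is coprime to d,
   the hypothesis n | 2r + k d says exactly that k = -2a (mod n). As k + 2a > 0
   this gives k + 2a >= n, and n >= r forces 2n >= a d. *)

Open Scope Z_scope.

Lemma gcd_mul_sub_l (a d r : Z) : Z.gcd (a * d - r) d = Z.gcd d r.
Proof.
  rewrite Z.gcd_comm.
  replace (a * d - r) with (- r + a * d) by ring.
  now rewrite Z.gcd_add_mult_diag_r, Z.gcd_opp_r.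
Qed.

Lemma divide_mul_sub_iff (a d r c k : Z) :
  Z.gcd d r = 1 ->
  (a * d - r | c * r + k * d) <-> (a * d - r | k + c * a).
Proof.
  intros hgcd.
  set (n := a * d - r).
  assert (hshift : d * (k + c * a) = (c * r + k * d) + c * n)
    by (unfold n; ring).
  split; intros hdiv.
  - apply Z.gauss with d.
    + rewrite hshift. apply Z.divide_add_r; [exact hdiv | apply Z.divide_factor_r].
    + unfold n. now rewrite gcd_mul_sub_l.
  - replace (c * r + k * d) with (d * (k + c * a) - c * n)
      by (rewrite hshift; ring).
    apply Z.divide_sub_r.
    + now apply Z.divide_mul_r.
    + apply Z.divide_factor_r.
Qed.

Theorem lemma1 (d r a n k : Z)
  (hd : (5 <= d)%Z)
  (hgcd : Z.gcd d r = 1%Z)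
  (ha : (1 <= a)%Z)
  (hn : n = (a * d - r)%Z)
  (hnr : (r <= n)%Z)
  (hk : (0 < k)%Z)
  (hdiv : (n | 2 * r + k * d)%Z) :
  (IZR k >= IZR a * (IZR d - 4) / 2)%R.
Proof.
  subst n.
  apply divide_mul_sub_iff in hdiv; [| exact hgcd].
  assert (hnle : a * d - r <= k + 2 * a) by (apply Z.divide_pos_le; [lia | exact hdiv]).
  assert (hbound : a * (d - 4) <= 2 * k) by lia.
  apply IZR_le in hbound.
  rewrite mult_IZR, minus_IZR, mult_IZR in hbound.
  simpl in hbound. lra.
Qed.
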